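(* Let $1\le\tau_1<\tau_2<\dots<\tau_m$ be fixed thresholds. Consider instances with two candidates $P,Q$, and any deterministic mechanism which selects a winner using only the threshold information described in the context. Then the worst-case distortion of the mechanism is at least $$\max\Big\{\tau_1,\ \frac{\tau_m+2}{\tau_m},\ \max_{1\le l\le m-1}\frac{\tau_l\tau_{l+1}+2\tau_{l+1}-1}{\tau_l\tau_{l+1}+1}\Big\}.$$ (Equivalently, with the conventions $\tau_0=1/\tau_1$ and $\tau_{m+1}=\infty$, the bound is $\max_{0\le l\le m}\frac{\tau_l\tau_{l+1}+2\tau_{l+1}-1}{\tau_l\tau_{l+1}+1}$, the $l=m$ term being interpreted as its limit $(\tau_m+2)/\tau_m$.)
   Context: Voters $N=\{1,\dots,n\}$ and a finite set of candidates $\mathcal C$ are points of an arbitrary (unknown) metric space $(X,d)$. Voter $i$ prefers $P$ to $Q$ only if $d(i,P)\le d(i,Q)$; the strength of this preference is $\alpha_i^{PQ}=d(i,Q)/d(i,P)\ge1$. $SC(Y)=\sum_{i\in N}d(i,Y)$. Distortion of a winner $P_I$ on instance $I=(N,\mathcal C,d)$ is $SC(P_I)/\min_{Z\in\mathcal C}SC(Z)$; the distortion of a mechanism is the supremum over instances. Threshold information: given thresholds $1\le\tau_1<\dots<\tau_m$ and setting $\tau_{m+1}=\infty$, for each voter $i$ and each pair $P,Q$, if $i$'s preference strength between $P$ and $Q$ is at least $\tau_1$ the mechanism learns which of the two $i$ prefers and the unique $l\in\{1,\dots,m\}$ with $\tau_l\le$ strength $<\tau_{l+1}$; if the strength is below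 $\tau_1$ the mechanism learns nothing about $i$'s preference between $P$ and $Q$. Thus it learns the sets $A_l=\{i: d(i,P)\le d(i,Q),\ \tau_l\le\alpha_i^{PQ}<\tau_{l+1}\}$, $B_l=\{j: d(j,Q)\le d(j,P),\ \tau_l\le\alpha_j^{QP}<\tau_{l+1}\}$, and the set $C$ of remaining voters. *)

From Stdlib Require Import Reals List Arith.
Import ListNotations.
Open Scope R_scope.

Definition Rleb (x y : R) : bool := if Rle_dec x y then true else false.
Definition Rltb (x y : R) : bool := if Rlt_dec x y then true else false.

Record Instance := mkInstance {
  X : Type;
  d : X -> X -> R;
  d_nonneg : forall x y, 0 <= d x y;
  d_sep : forall x y, d x y = 0 <-> x = y;
  d_sym : forall x y, d x y = d y x;
  d_tri : forall x y z, d x z <= d x y + d y z;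
  candP : X;
  candQ : X;
  voters : list X
}.

Definition SC (I : Instance) (Y : X I) : R :=
  fold_right Rplus 0 (map (fun v => d I v Y) (voters I)).

(* Thresholds tau = [tau_1; ...; tau_m] (0-indexed in the list).
   level_ok tau l a b : a voter at distance a from candidate Y and b from
   candidate Z prefers Y (a <= b) with strength alpha = b/a in
   [tau_{l+1}, tau_{l+2}) (paper's 1-based indices), tau_{m+1} = infinity.
   Written multiplicatively: tau_l * a <= b < tau_{l+1} * a, so that
   a = 0 gives strength infinity (top level). *)
Definition level_ok (tau : list R) (l : nat) (a b : R) : bool :=
  Rleb a b && Rleb (nth l tau 0 * a) b &&
  (if Nat.ltb (S l) (length tau) then Rltb b (nth (S l) tau 0 * a) else true).

(* Information about one voter: membership in A_1..A_m and in B_1..B_m.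
   (Membership in C is determined: in no A_l and no B_l.) *)
Definition voter_info (tau : list R) (I : Instance) (v : X I)
  : list bool * list bool :=
  (map (fun l => level_ok tau l (d I v (candP I)) (d I v (candQ I)))
       (seq 0 (length tau)),
   map (fun l => level_ok tau l (d I v (candQ I)) (d I v (candP I)))
       (seq 0 (length tau))).

Definition threshold_info (tau : list R) (I : Instance)
  : list (list bool * list bool) :=
  map (voter_info tau I) (voters I).

Definition Mechanism := list (list bool * list bool) -> bool.

Definition winner (tau : list R) (M : Mechanism) (I : Instance) : X I :=
  if M (threshold_info tau I) then candP I else candQ I.

(* "distortion of M on I is at most D": SC(winner) / min SC <= D,
   written multiplicatively (positive / 0 counts as infinite distortion). *)
Definition distortion_le (tau : list R) (M : Mechanism) (I : Instance) (D : R)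
  : Prop :=
  SC I (winner tau M I) <= D * Rmin (SC I (candP I)) (SC I (candQ I)).

Definition valid_thresholds (tau : list R) : Prop :=
  tau <> [] /\ 1 <= nth 0 tau 0 /\
  (forall k, (S k < length tau)%nat -> nth k tau 0 < nth (S k) tau 0).

Definition mid_term (a b : R) : R := (a * b + 2 * b - 1) / (a * b + 1).

Definition lower_bound (tau : list R) : R :=
  let m := length tau in
  let t1 := nth 0 tau 0 in
  let tm := nth (m - 1) tau 0 in
  fold_right Rmax (Rmax t1 ((tm + 2) / tm))
    (map (fun k => mid_term (nth k tau 0) (nth (S k) tau 0)) (seq 0 (m - 1))).

(* All hard instances live on the real line: candidate P sits at 0, candidate
   Q at some q > 0, and voters are real numbers.  A voter's threshold
   information depends only on which thresholds tau_j satisfy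
   tau_j * d(v,P) <= d(v,Q) (or the symmetric comparison), so two voters whose
   distance ratios lie in the same threshold band are indistinguishable.

   For each term of the bound we build a pair of instances with identical
   threshold information, where P is optimal in the first and Q in the second,
   and both "wrong" choices have cost ratio r.  Any deterministic mechanism
   picks the same side on both, hence has distortion at least r.  The ratios
   obtained approach the three kinds of terms (tau_1, (tau_m+2)/tau_m and the
   mid terms) from inside open intervals, so a one-sided limit argument
   (continuity at the endpoint) yields each term; the theorem is their
   maximum. *)
From Stdlib Require Import Reals List Arith Lra Lia Psatz.
Import ListNotations.
Open Scope R_scope.

Lemma threshold_lt tau : valid_thresholds tau -> forall i j, (i < j)%nat ->
  (j < length tau)%nat -> nth i tau 0 < nth j tau 0.
Proof.
  intros [_ [_ Hinc]] i j Hij; induction Hij as [|j Hij IH]; intros Hj.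
  - apply Hinc; lia.
  - pose proof (Hinc j Hj). assert (nth i tau 0 < nth j tau 0) by (apply IH; lia).
    lra.
Qed.

Lemma threshold_le tau : valid_thresholds tau -> forall i j, (i <= j)%nat ->
  (j < length tau)%nat -> nth i tau 0 <= nth j tau 0.
Proof.
  intros Hv i j Hij Hj. destruct (Nat.eq_dec i j) as [->|Hne]; [lra|].
  left; apply threshold_lt; auto; lia.
Qed.

Lemma threshold_ge1 tau : valid_thresholds tau -> forall i,
  (i < length tau)%nat -> 1 <= nth i tau 0.
Proof.
  intros Hv i Hi. pose proof (threshold_le tau Hv 0 i ltac:(lia) Hi).
  destruct Hv as [_ [H1 _]]; lra.
Qed.

Lemma level_ok_reversed tau l p q : q < p -> level_ok tau l p q = false.
Proof.
  intros H; unfold level_ok, Rleb; destruct (Rle_dec p q); [lra|reflexivity].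
Qed.

Lemma level_ok_below tau l p q : q < nth l tau 0 * p -> level_ok tau l p q = false.
Proof.
  intros H; unfold level_ok, Rleb at 2.
  destruct (Rle_dec (nth l tau 0 * p) q); [lra|].
  now destruct (Rleb p q).
Qed.

Lemma level_ok_congr tau l p q p' q' : p <= q -> p' <= q' ->
  (l < length tau)%nat ->
  (forall j, (j < length tau)%nat ->
     (nth j tau 0 * p <= q <-> nth j tau 0 * p' <= q')) ->
  level_ok tau l p q = level_ok tau l p' q'.
Proof.
  intros Hpq Hpq' Hl Hsame. unfold level_ok, Rleb, Rltb.
  destruct (Rle_dec p q); [|lra]. destruct (Rle_dec p' q'); [|lra].
  pose proof (Hsame l Hl) as [Hlo Hlo'].
  destruct (Rle_dec (nth l tau 0 * p) q) as [A|A];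
  destruct (Rle_dec (nth l tau 0 * p') q') as [B|B];
    try (exfalso; tauto); [|reflexivity].
  simpl. destruct (Nat.ltb (S l) (length tau)) eqn:E; [|reflexivity].
  apply Nat.ltb_lt in E. pose proof (Hsame (S l) E) as [Hhi Hhi'].
  destruct (Rlt_dec q (nth (S l) tau 0 * p)) as [C|C];
  destruct (Rlt_dec q' (nth (S l) tau 0 * p')) as [F|F]; try reflexivity; exfalso.
  - apply Rnot_lt_le in F; apply Hhi' in F; lra.
  - apply Rnot_lt_le in C; apply Hhi in C; lra.
Qed.

Definition pair_info (tau : list R) (p q : R) : list bool * list bool :=
  (map (fun l => level_ok tau l p q) (seq 0 (length tau)),
   map (fun l => level_ok tau l q p) (seq 0 (length tau))).

Lemma pair_info_ext tau p q p' q' :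
  (forall l, (l < length tau)%nat -> level_ok tau l p q = level_ok tau l p' q') ->
  (forall l, (l < length tau)%nat -> level_ok tau l q p = level_ok tau l q' p') ->
  pair_info tau p q = pair_info tau p' q'.
Proof.
  intros H1 H2; unfold pair_info; f_equal; apply map_ext_in; intros l Hl;
    apply in_seq in Hl; [apply H1 | apply H2]; lia.
Qed.

Lemma pair_info_prefer_P tau p q p' q' : p < q -> p' < q' ->
  (forall j, (j < length tau)%nat ->
     (nth j tau 0 * p <= q <-> nth j tau 0 * p' <= q')) ->
  pair_info tau p q = pair_info tau p' q'.
Proof.
  intros Hpq Hpq' Hsame; apply pair_info_ext; intros l Hl.
  - apply level_ok_congr; auto; lra.
  - rewrite !level_ok_reversed; auto.
Qed.

Lemma pair_info_prefer_Q tau p q p' q' : q < p -> q' < p' ->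
  (forall j, (j < length tau)%nat ->
     (nth j tau 0 * q <= p <-> nth j tau 0 * q' <= p')) ->
  pair_info tau p q = pair_info tau p' q'.
Proof.
  intros Hqp Hqp' Hsame; apply pair_info_ext; intros l Hl.
  - rewrite !level_ok_reversed; auto.
  - apply level_ok_congr; auto; lra.
Qed.

Lemma pair_info_weak tau p q p' q' : valid_thresholds tau ->
  0 <= p -> 0 <= q -> q < nth 0 tau 0 * p -> p < nth 0 tau 0 * q ->
  0 <= p' -> 0 <= q' -> q' < nth 0 tau 0 * p' -> p' < nth 0 tau 0 * q' ->
  pair_info tau p q = pair_info tau p' q'.
Proof.
  intros Hv **; apply pair_info_ext; intros l Hl;
    assert (nth 0 tau 0 <= nth l tau 0) by (apply threshold_le; auto; lia);
    rewrite !level_ok_below; auto; nra.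
Qed.

Lemma line_nonneg (x y : R) : 0 <= Rabs (x - y).
Proof. apply Rabs_pos. Qed.

Lemma line_sep (x y : R) : Rabs (x - y) = 0 <-> x = y.
Proof.
  split; intro H.
  - destruct (Rcase_abs (x - y)).
    + rewrite Rabs_left in H; lra.
    + rewrite Rabs_right in H; lra.
  - subst. rewrite Rminus_diag. apply Rabs_R0.
Qed.

Lemma line_sym (x y : R) : Rabs (x - y) = Rabs (y - x).
Proof. apply Rabs_minus_sym. Qed.

Lemma line_tri (x y z : R) : Rabs (x - z) <= Rabs (x - y) + Rabs (y - z).
Proof.
  replace (x - z) with ((x - y) + (y - z)) by ring. apply Rabs_triang.
Qed.

Definition line_instance (q : R) (vs : list R) : Instance :=
  mkInstance R (fun x y => Rabs (x - y)) line_nonneg line_sep line_sym line_tri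
    0 q vs.

Lemma line_info tau q vs : threshold_info tau (line_instance q vs) =
  map (fun v => pair_info tau (Rabs (v - 0)) (Rabs (v - q))) vs.
Proof. reflexivity. Qed.

Lemma line_SC q vs (y : R) : SC (line_instance q vs) y =
  fold_right Rplus 0 (map (fun v => Rabs (v - y)) vs).
Proof. reflexivity. Qed.

Ltac eval_abs := repeat match goal with
  | |- context [Rabs ?e] =>
      first [ rewrite (Rabs_right e) by nra | rewrite (Rabs_left1 e) by nra ]
  end.

Ltac line_cost := rewrite line_SC; cbn [map fold_right]; eval_abs; ring.

Lemma ratio_le a b D : 0 < b -> a <= D * b -> a / b <= D.
Proof.
  intros Hb H. apply Rmult_le_reg_r with b; [lra|].
  unfold Rdiv; rewrite Rmult_assoc, Rinv_l; lra.
Qed.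

(* Core indistinguishability argument: on two instances with the same threshold
   information a deterministic mechanism picks the same side; if P is optimal
   in the first and Q in the second, one of the two choices is wrong. *)
Lemma indistinguishable_bound tau M D (I1 I2 : Instance) :
  distortion_le tau M I1 D -> distortion_le tau M I2 D ->
  threshold_info tau I1 = threshold_info tau I2 ->
  0 < SC I1 (candP I1) <= SC I1 (candQ I1) ->
  0 < SC I2 (candQ I2) <= SC I2 (candP I2) ->
  Rmin (SC I1 (candQ I1) / SC I1 (candP I1))
       (SC I2 (candP I2) / SC I2 (candQ I2)) <= D.
Proof.
  intros H1 H2 Hinfo [HP1 HPQ1] [HQ2 HQP2].
  unfold distortion_le, winner in H1, H2. rewrite <- Hinfo in H2.
  destruct (M (threshold_info tau I1)).
  - rewrite Rmin_right in H2 by lra.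
    apply Rle_trans with (2 := ratio_le _ _ _ HQ2 H2), Rmin_r.
  - rewrite Rmin_left in H1 by lra.
    apply Rle_trans with (2 := ratio_le _ _ _ HP1 H1), Rmin_l.
Qed.

Lemma le_at_right_limit (h : R -> R) (D c : R) : 0 < c -> continuity_pt h 0 ->
  (forall x, 0 < x < c -> h x <= D) -> h 0 <= D.
Proof.
  intros Hc Hcont Hnear.
  destruct (Rle_dec (h 0) D) as [|Hgt]; [assumption|]. exfalso.
  apply Rnot_le_lt in Hgt.
  destruct (Hcont (h 0 - D)) as [alp [Halp Hball]]; [lra|].
  set (x := Rmin alp c / 2).
  assert (Hx : 0 < x /\ x < alp /\ x < c).
  { unfold x; pose proof (Rmin_l alp c); pose proof (Rmin_r alp c).
    repeat split; try lra. apply Rmin_case; lra. }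
  assert (Hclose : Rabs (h x - h 0) < h 0 - D).
  { apply (Hball x). split; [split; [exact I|lra]|].
    change (Rabs (x - 0) < alp). rewrite Rminus_0_r, Rabs_right; lra. }
  pose proof (Hnear x (conj (proj1 Hx) (proj2 (proj2 Hx)))).
  apply Rabs_def2 in Hclose. lra.
Qed.

Lemma Rmult_le_cancel_r c u v : 0 < c -> (u * c <= v * c <-> u <= v).
Proof. intros; split; intro; nra. Qed.

Lemma Rmin_self (r : R) : Rmin r r = r.
Proof. apply Rmin_left, Rle_refl. Qed.

Section Terms.
Variable tau : list R.
Hypothesis Hv : valid_thresholds tau.
Variable M : Mechanism.
Variable D : R.
Hypothesis HD : forall I : Instance, distortion_le tau M I D.

Let m := length tau.

Lemma length_pos : (0 < m)%nat.
Proof. destruct Hv as [H _]. unfold m; destruct tau; [congruence|simpl; lia]. Qed.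

(* Term (tau_m + 2)/tau_m.  For s > tau_m, voters {0, s} with Q at s+1 and
   voters {1, s+1} are both at the top level; the costs are (s, s+2) and
   (s+2, s). *)
Lemma top_term : let tm := nth (m - 1) tau 0 in (tm + 2) / tm <= D.
Proof.
  intro tm. pose proof length_pos.
  assert (Htm : 1 <= tm) by (apply threshold_ge1; auto; lia).
  assert (Hbelow : forall j, (j < m)%nat -> 1 <= nth j tau 0 <= tm).
  { intros j Hj; split; [apply threshold_ge1 | apply threshold_le]; auto; lia. }
  set (h := fun x => (tm + x + 2) / (tm + x)).
  replace ((tm + 2) / tm) with (h 0) by (unfold h; rewrite Rplus_0_r; reflexivity).
  apply le_at_right_limit with 1; [lra | unfold h; reg; lra |].
  intros x Hx. unfold h. set (s := tm + x).
  assert (Hs : tm < s) by (unfold s; lra).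
  set (I1 := line_instance (s + 1) [0; s]).
  set (I2 := line_instance (s + 1) [1; s + 1]).
  assert (Hinfo : threshold_info tau I1 = threshold_info tau I2).
  { unfold I1, I2; rewrite !line_info; cbn [map]; eval_abs.
    f_equal; [|f_equal].
    - apply pair_info_prefer_P; try lra. intros j Hj.
      pose proof (Hbelow j Hj). split; intro; nra.
    - apply pair_info_prefer_Q; try lra. intros j Hj.
      pose proof (Hbelow j Hj). split; intro; nra. }
  assert (C1P : SC I1 0 = s) by (unfold I1; line_cost).
  assert (C1Q : SC I1 (s + 1) = s + 2) by (unfold I1; line_cost).
  assert (C2P : SC I2 0 = s + 2) by (unfold I2; line_cost).
  assert (C2Q : SC I2 (s + 1) = s) by (unfold I2; line_cost).
  pose proof (indistinguishable_bound tau M D I1 I2 (HD I1) (HD I2) Hinfo) as B.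
  simpl in B. rewrite C1P, C1Q, C2P, C2Q, Rmin_self in B. apply B; lra.
Qed.

(* Term tau_1.  For 1 < r < tau_1, a single voter at distances (1, r) or
   (r, 1) reveals nothing, and the costs are (1, r) and (r, 1). *)
Lemma first_term : nth 0 tau 0 <= D.
Proof.
  pose proof length_pos. set (t1 := nth 0 tau 0).
  assert (Ht1 : 1 <= t1) by (apply threshold_ge1; auto).
  destruct (Req_dec t1 1) as [Hone|Hone].
  { pose proof top_term as Htop. simpl in Htop.
    set (tm := nth (m - 1) tau 0) in Htop.
    assert (1 <= tm) by (apply threshold_ge1; auto; unfold m in *; lia).
    assert (1 <= (tm + 2) / tm).
    { apply Rmult_le_reg_r with tm; [lra|].
      unfold Rdiv; rewrite Rmult_assoc, Rinv_l; lra. }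
    lra. }
  set (h := fun x => t1 - x).
  replace t1 with (h 0) by (unfold h; ring).
  apply le_at_right_limit with (t1 - 1); [lra | unfold h; reg |].
  intros x Hx. unfold h. set (r := t1 - x).
  assert (Hr : 1 < r < t1) by (unfold r; lra).
  set (I1 := line_instance (r + 1) [1]).
  set (I2 := line_instance (r + 1) [r]).
  assert (Hinfo : threshold_info tau I1 = threshold_info tau I2).
  { unfold I1, I2; rewrite !line_info; cbn [map]; eval_abs.
    f_equal; apply pair_info_weak; auto; fold t1; nra. }
  assert (C1P : SC I1 0 = 1) by (unfold I1; line_cost).
  assert (C1Q : SC I1 (r + 1) = r) by (unfold I1; line_cost).
  assert (C2P : SC I2 0 = r) by (unfold I2; line_cost).
  assert (C2Q : SC I2 (r + 1) = 1) by (unfold I2; line_cost).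
  pose proof (indistinguishable_bound tau M D I1 I2 (HD I1) (HD I2) Hinfo) as B.
  simpl in B. rewrite C1P, C1Q, C2P, C2Q, Rdiv_1_r, Rmin_self in B. apply B; lra.
Qed.

(* For tau_k < t, s < tau_(k+1) both voter pairs
   (s-1, t(s-1)) and (1+t, s(1+t)) lie in level k, so the instances below
   are indistinguishable; their costs are (ts+1, ts+2s-1) and reversed. *)
Lemma middle_term k : (S k < m)%nat ->
  mid_term (nth k tau 0) (nth (S k) tau 0) <= D.
Proof.
  intros Hk. set (a := nth k tau 0). set (b := nth (S k) tau 0).
  assert (Ha : 1 <= a) by (apply threshold_ge1; auto; unfold m in *; lia).
  assert (Hab : a < b) by (apply threshold_lt; auto).
  set (h := fun x => mid_term (a + x) (b - x)).
  replace (mid_term a b) with (h 0)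
    by (unfold h; rewrite Rplus_0_r, Rminus_0_r; reflexivity).
  apply le_at_right_limit with (b - a); [lra | unfold h, mid_term; reg; nra |].
  intros x Hx. unfold h. set (t := a + x). set (s := b - x).
  assert (Ht : a < t < b) by (unfold t; lra).
  assert (Hs : a < s < b) by (unfold s; lra).
  assert (Hband : forall j, (j < m)%nat ->
            (nth j tau 0 <= t <-> nth j tau 0 <= s)).
  { intros j Hj. destruct (le_lt_dec j k) as [L|L].
    - assert (nth j tau 0 <= a) by (apply threshold_le; auto; unfold m in *; lia).
      split; intro; lra.
    - assert (b <= nth j tau 0) by (apply threshold_le; auto; unfold m in *; lia).
      split; intro; lra. }
  assert (Hscaled : forall j, (j < m)%nat ->
            (nth j tau 0 * (s - 1) <= t * (s - 1) <->
             nth j tau 0 * (1 + t) <= s * (1 + t))).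
  { intros j Hj. rewrite (Rmult_le_cancel_r (s - 1)), (Rmult_le_cancel_r (1 + t))
      by lra. now apply Hband. }
  set (q := (1 + t) * (s - 1)).
  set (I1 := line_instance q [- (1 + t); t * (s - 1)]).
  set (I2 := line_instance q [s - 1; s * (1 + t)]).
  assert (Hinfo : threshold_info tau I1 = threshold_info tau I2).
  { unfold I1, I2, q; rewrite !line_info; cbn [map]; eval_abs.
    f_equal; [|f_equal].
    - apply pair_info_prefer_P; try nra. intros j Hj.
      specialize (Hscaled j Hj). split; intro; nra.
    - apply pair_info_prefer_Q; try nra. intros j Hj.
      specialize (Hscaled j Hj). split; intro; nra. }
  assert (C1P : SC I1 0 = t * s + 1) by (unfold I1, q; line_cost).
  assert (C1Q : SC I1 q = t * s + 2 * s - 1) by (unfold I1, q; line_cost).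
  assert (C2P : SC I2 0 = t * s + 2 * s - 1) by (unfold I2, q; line_cost).
  assert (C2Q : SC I2 q = t * s + 1) by (unfold I2, q; line_cost).
  pose proof (indistinguishable_bound tau M D I1 I2 (HD I1) (HD I2) Hinfo) as B.
  simpl in B. rewrite C1P, C1Q, C2P, C2Q, Rmin_self in B.
  unfold mid_term. apply B; nra.
Qed.

End Terms.

Lemma fold_Rmax_le base l D : base <= D -> (forall y, In y l -> y <= D) ->
  fold_right Rmax base l <= D.
Proof.
  induction l as [|a l IH]; intros Hb H; simpl; [assumption|].
  apply Rmax_lub; [apply H; left; reflexivity | apply IH; auto].
  intros; apply H; right; assumption.
Qed.

Theorem mainTheorem2 (tau : list R) (Htau : valid_thresholds tau)
  (M : Mechanism) (D : R)
  (HD : forall I : Instance, distortion_le tau M I D) :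
  lower_bound tau <= D.
Proof.
  unfold lower_bound. apply fold_Rmax_le.
  - apply Rmax_lub; [apply (first_term tau Htau M D HD) | apply (top_term tau Htau M D HD)].
  - intros y Hy. apply in_map_iff in Hy. destruct Hy as [k [<- Hk]].
    apply in_seq in Hk. apply (middle_term tau Htau M D HD). lia.
Qed.
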